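(* Assume the hypotheses on $\mathfrak{R}$ and the discrete inf-sup condition: there exist a linear operator $\mathfrak{R}:V\to W'$ and constants $\alpha_*,M^*,\kappa>0$ with $\inf_{w\ne0}\sup_{v\neq0}\langle\mathfrak{R}v,w\rangle/(\|w\|_W\|v\|_V)\ge\alpha_*$, $\|\mathfrak{R}v\|_{W'}\le M^*\|v\|_V$ for all $v\in V$, and $\kappa\|w\|_W\le\sup_{v_\eta\in V_\eta,v_\eta\ne0}\mathcal{A}(w,v_\eta)/\|v_\eta\|_V$ for all $w\in W_\theta\cup S_\theta$. Let $\mathcal{J}:W\to\mathbb{R}$ be a functional with constants $0<c_*\le C^*$ such that $c_*\|w\|_{op,\eta}\le\mathcal{J}(w)\le C^*\|w\|_{op,\eta}$ for all $w\in W$. Let $(\tilde w^n_\theta)\subset W_\theta$ satisfy $\lim_n\mathcal{J}(u-\tilde w^n_\theta)=\inf_{w_\theta\in W_\theta}\mathcal{J}(u-w_\theta)$ and converge weakly in $W$ to $u^\flat_\theta$. Then $$\|u-u^\flat_\theta\|_W\le\Big(1+2\frac{C^*}{c_*}\frac{M^*}{\alpha_*}\frac{M}{\kappa}\Big)\inf_{w_\theta\in W_\theta}\|u-w_\theta\|_W.$$ Moreover every such minimizing sequence is bounded in $W$ and hence has a weakly convergent subsequence.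
   Context: $W$ and $V$ are reflexive separable real Banach spaces, $W'$ the dual of $W$ with duality pairing $\langle\cdot,\cdot\rangle$. $\mathcal{A}:W\times V\to\mathbb{R}$ is a bilinear form with $\mathcal{A}(w,v)\le M\|w\|_W\|v\|_V$, $\mathcal{F}:V\to\mathbb{R}$ is bounded linear, and $u\in W$ is the unique solution of $\mathcal{A}(u,v)=\mathcal{F}(v)$ for all $v\in V$. $W_\theta\subseteq W$ and $V_\eta\subseteq V$ are arbitrary subsets, $V_\eta$ containing an element of nonzero norm. For $w\in W$, $\|w\|_{op,\eta}:=\sup_{v_\eta\in V_\eta,\ \|v_\eta\|_V\neq0}\mathcal{A}(w,v_\eta)/\|v_\eta\|_V$. $S_\theta:=\{w_1-w_2:\ w_1,w_2\in W_\theta\}$. *)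

From HB Require Import structures.
From mathcomp Require Import all_boot all_order all_algebra.
From mathcomp Require Import all_classical all_reals all_analysis.
Set Implicit Arguments. Unset Strict Implicit. Unset Printing Implicit Defensive.
Import Order.TTheory GRing.Theory Num.Theory.
Import numFieldNormedType.Exports.
Local Open Scope classical_set_scope.
Local Open Scope ring_scope.

Section Defs.
Variable R : realType.

Definition is_clf (W : normedModType R) (f : W -> R) : Prop :=
  (forall (a : R) (x y : W), f (a *: x + y) = a * f x + f y) /\ continuous f.

Definition dual_norm (W : normedModType R) (f : W -> R) : R :=
  sup [set `|f w| / `|w| | w in [set w : W | w != 0]].

(* reflexivity: the canonical embedding W -> W'' is surjective, i.e. every
   bounded linear functional on W' is the evaluation at some w in W. *)
Definition reflexive_space (W : normedModType R) : Prop :=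
  forall Phi : (W -> R) -> R,
    (forall (a : R) (f g : W -> R), is_clf f -> is_clf g ->
       Phi (fun w => a * f w + g w) = a * Phi f + Phi g) ->
    (exists C : R, forall f, is_clf f -> `|Phi f| <= C * dual_norm f) ->
    exists w : W, forall f, is_clf f -> Phi f = f w.

Definition separable_space (W : normedModType R) : Prop :=
  exists D : set W, countable D /\ dense D.

Definition weak_cvg (W : normedModType R) (x : nat -> W) (y : W) : Prop :=
  forall f : W -> R, is_clf f -> (fun n => f (x n)) @ \oo --> f y.

Definition op_norm (W V : normedModType R) (A : W -> V -> R) (Veta : set V)
  (w : W) : R :=
  sup [set A w v / `|v| | v in [set v : V | Veta v /\ `|v| != 0]].

Definition diff_set (W : normedModType R) (Wt : set W) : set W :=
  [set w | exists w1 w2, Wt w1 /\ Wt w2 /\ w = w1 - w2].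

End Defs.

From HB Require Import structures.
From mathcomp Require Import all_boot all_order all_algebra.
From mathcomp Require Import all_classical all_reals all_analysis.
From mathcomp Require Import ring lra.
Set Implicit Arguments. Unset Strict Implicit. Unset Printing Implicit Defensive.
Import Order.TTheory GRing.Theory Num.Theory.
Import numFieldNormedType.Exports.
Local Open Scope classical_set_scope.
Local Open Scope ring_scope.

(* Fix w in W_theta. The discrete inf-sup condition, subadditivity of the
   operator seminorm and c_* ||.||_{op,eta} <= J <= C^* ||.||_{op,eta} give,
   eventually along the minimizing sequence,
     kappa ||w - w_n|| <= (1 + C^*/c_* ) M ||u - w|| + eps.
   This bounds the sequence; testing w - w_n against R v and passing to the weak
   limit, the continuous inf-sup condition yields
     alpha ||w - u_b|| <= M^* (1 + C^*/c_* ) M ||u - w|| / kappa,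
   and the triangle inequality through w gives the estimate (C^*/c_* >= 1).
   For compactness, reflexivity turns limits along an ultrafilter into weak
   limits; a dense sequence e_j of V makes the R e_j a countable family that
   separates points of W, so a diagonal extraction converges weakly. *)

Section ContinuousLinearFunctional.
Variables (R : realType) (W : normedModType R) (f : W -> R).
Hypothesis hf : is_clf f.

Lemma clf0 : f 0 = 0.
Proof. have := hf.1 1 0 0; rewrite scale1r addr0 mul1r; lra. Qed.

Lemma clfZ a x : f (a *: x) = a * f x.
Proof. by have := hf.1 a x 0; rewrite !addr0 clf0 addr0. Qed.

Lemma clfB x y : f (x - y) = f x - f y.
Proof. by have := hf.1 (-1) y x; rewrite scaleN1r mulN1r addrC [_ + f x]addrC. Qed.

Lemma clf_bounded : exists C, 0 < C /\ forall x, `|f x| <= C * `|x|.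
Proof.
have := hf.2 0; rewrite /continuous_at clf0 => /cvgr_dist_lt /(_ 1 ltr01).
rewrite -nbhs_nearE => /nbhs_ballP [e /= e0 he].
exists (2 / e); split; first by rewrite divr_gt0.
move=> x; have [->|x0] := eqVneq x 0; first by rewrite clf0 !normr0 mulr0.
have nx : 0 < `|x| by rewrite normr_gt0.
have s0 : 0 < e / 2 / `|x| by rewrite !divr_gt0.
have : ball 0 e ((e / 2 / `|x|) *: x).
  rewrite -ball_normE /ball_ /= sub0r normrN normrZ gtr0_norm // divfK ?gt_eqF //.
  lra.
move/he; rewrite /= sub0r normrN clfZ normrM (gtr0_norm s0) => lt1.
rewrite -(ler_pM2l s0) (_ : _ * (2 / e * _) = 1); first exact: ltW.
by field; rewrite !gt_eqF.
Qed.

Lemma dual_norm_ge0 : 0 <= dual_norm f.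
Proof.
rewrite /dual_norm; set E := [set `|f w| / `|w| | w in [set w : W | w != 0]].
have [[r Er]|E0] := pselect (E !=set0); last first.
  have -> : E = set0 by apply/seteqP; split => // r Er; apply: E0; exists r.
  by rewrite sup0.
have [C [_ hC]] := clf_bounded.
have ubE : has_ubound E.
  by exists C => _ [w /= w0 <-]; rewrite ler_pdivrMr ?normr_gt0.
apply: le_trans (ub_le_sup ubE Er).
by case: Er => w _ <-; rewrite divr_ge0.
Qed.

Lemma clf_le_dual_norm x : `|f x| <= dual_norm f * `|x|.
Proof.
have [C [_ hC]] := clf_bounded.
have [->|x0] := eqVneq x 0; first by rewrite clf0 !normr0 mulr0.
rewrite -ler_pdivrMr ?normr_gt0 //; apply: ub_le_sup; last by exists x.
by exists C => _ [w /= w0 <-]; rewrite ler_pdivrMr ?normr_gt0.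
Qed.

Lemma clf_weak_limit_le (x z : W) (y : nat -> W) (K : R) :
  weak_cvg y z -> (forall e, 0 < e -> \forall n \near \oo, `|x - y n| <= K + e) ->
  `|f (x - z)| <= dual_norm f * K.
Proof.
move=> yz hK; have d0 := dual_norm_ge0.
have fxy : (fun n => f (x - y n)) @ \oo --> f (x - z).
  rewrite clfB; under eq_fun do rewrite clfB.
  by apply: cvgB; [exact: cvg_cst | exact: yz].
apply/ler_addgt0Pr => e e0.
have d1 : 0 < dual_norm f + 1 by lra.
apply: (closed_cvg [set r | r <= dual_norm f * K + e] (@closed_le _ _) _ _ (cvg_norm fxy)).
apply: filterS (hK _ (divr_gt0 e0 d1)) => n hn /=.
apply: le_trans (clf_le_dual_norm _) _; apply: le_trans (ler_wpM2l d0 hn) _.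
rewrite mulrDr lerD2l mulrA ler_pdivrMr //; nra.
Qed.

End ContinuousLinearFunctional.

Section InfSup.
Variables (R : realType) (W V : normedModType R) (Rf : V -> W -> R) (alpha : R).

Definition infsup_const : \bar R :=
  ereal_inf [set ereal_sup
       [set (Rf v w / (`|w| * `|v|))%:E | v in [set v : V | v != 0]]
     | w in [set w : W | w != 0]].

Hypothesis alpha_le_infsup : (alpha%:E <= infsup_const)%E.

Lemma infsup_le (d : W) (b : R) :
  0 <= b -> (forall v, v != 0 -> Rf v d <= b * `|v|) -> alpha * `|d| <= b.
Proof.
move=> b0 hb; have [->|d0] := eqVneq d 0.
  by rewrite normr0 mulr0.
have nd : 0 < `|d| by rewrite normr_gt0.
rewrite -ler_pdivlMr // -lee_fin; apply: (le_trans alpha_le_infsup).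
apply: le_trans (ereal_inf_lbound _) _; first by exists d.
apply: ge_ereal_sup => _ [v /= v0 <-]; rewrite lee_fin.
have nv : 0 < `|v| by rewrite normr_gt0.
rewrite ler_pdivrMr ?mulr_gt0 // mulrA divfK ?gt_eqF //; exact: hb.
Qed.

Lemma infsup_eq0 (d : W) : 0 < alpha -> (forall v, Rf v d = 0) -> d = 0.
Proof.
move=> a0 hd; apply/eqP; rewrite -normr_le0 -(pmulr_rle0 _ a0).
by apply: infsup_le => // v _; rewrite hd mul0r.
Qed.

End InfSup.

Section OpNorm.
Variables (R : realType) (W V : normedModType R) (A : W -> V -> R) (M : R) (Veta : set V).
Hypothesis A_linearl : forall (a : R) (w1 w2 : W) (v : V),
  A (a *: w1 + w2) v = a * A w1 v + A w2 v.
Hypothesis A_linearr : forall (a : R) (w : W) (v1 v2 : V),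
  A w (a *: v1 + v2) = a * A w v1 + A w v2.
Hypothesis A_bounded : forall w v, A w v <= M * `|w| * `|v|.
Hypothesis Veta_neq0 : exists v0 : V, Veta v0 /\ `|v0| != 0.

Lemma bilinear_bound_ge0 (w : W) : 0 <= M * `|w|.
Proof.
have [v0 [_ nv0]] := Veta_neq0; have v0_gt0 : 0 < `|v0| by rewrite normr_gt0 -normr_eq0.
have A0 : A w 0 = 0 by have := A_linearr 1 w 0 0; rewrite scale1r addr0 mul1r; lra.
have ANr : A w (- v0) = - A w v0.
  by have := A_linearr (-1) w v0 0; rewrite !addr0 A0 addr0 scaleN1r mulN1r.
have := A_bounded w (- v0); rewrite ANr normrN => h1.
have := A_bounded w v0 => h2.
have : 0 <= M * `|w| * `|v0| by lra.
by rewrite pmulr_lge0.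
Qed.

Lemma op_norm_le w : op_norm A Veta w <= M * `|w|.
Proof.
have [v0 ?] := Veta_neq0; apply: ge_sup; first by exists (A w v0 / `|v0|), v0.
move=> _ [v [_ nv] <-]; have v_gt0 : 0 < `|v| by rewrite normr_gt0 -normr_eq0.
by rewrite ler_pdivrMr.
Qed.

Lemma op_norm_ge w v : Veta v -> `|v| != 0 -> A w v / `|v| <= op_norm A Veta w.
Proof.
move=> ev nv; apply: ub_le_sup; last by exists v.
exists (M * `|w|) => _ [v' [_ nv'] <-]; have v'_gt0 : 0 < `|v'| by rewrite normr_gt0 -normr_eq0.
by rewrite ler_pdivrMr.
Qed.

Lemma op_normD w1 w2 : op_norm A Veta (w1 + w2) <= op_norm A Veta w1 + op_norm A Veta w2.
Proof.
have [v0 ?] := Veta_neq0; apply: ge_sup; first by exists (A (w1 + w2) v0 / `|v0|), v0.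
move=> _ [v [ev nv] <-]; have := A_linearl 1 w1 w2 v; rewrite scale1r mul1r => ->.
by rewrite mulrDl; apply: lerD; apply: op_norm_ge.
Qed.

End OpNorm.

Lemma cvg_EFin_near_lt (R : realType) (x : nat -> R) (l : \bar R) (b : R) :
  ((fun n => (x n)%:E) @ \oo --> l)%E -> (l < b%:E)%E -> \forall n \near \oo, x n < b.
Proof.
move=> xl lb; have := xl _ (open_ereal_lt' lb); rewrite nbhs_filterE => h.
near=> n; rewrite -lte_fin; near: n; exact: h.
Unshelve. all: by end_near.
Qed.

Lemma near_bounded_seq (R : realType) (T : normedModType R) (y : nat -> T) (B : R) :
  (\forall n \near \oo, `|y n| <= B) -> exists B', forall n, `|y n| <= B'.
Proof.
move=> [N _ hN]; exists (B + \sum_(i < N) `|y i|) => n.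
have hsum : 0 <= \sum_(i < N) `|y i| by apply: sumr_ge0.
have [Nn|nN] := leqP N n.
  by have := hN n Nn; lra.
rewrite (bigD1 (Ordinal nN)) //=.
have : 0 <= \sum_(i < N | i != Ordinal nN) `|y i| by apply: sumr_ge0.
have := hN N (leqnn N); have := normr_ge0 (y N); lra.
Qed.

Lemma le_scale_ereal_inf (R : realType) (T : Type) (S : set T) (g : T -> R) (x c : R)
  (t0 : T) : S t0 -> (forall t, 0 <= g t) -> 0 <= x ->
  (forall t, S t -> x <= c * g t) ->
  (x%:E <= c%:E * ereal_inf [set (g t)%:E | t in S])%E.
Proof.
move=> St0 g0 x0 hx; have [c0|] := ltP 0 c.
  have : ((x / c)%:E <= ereal_inf [set (g t)%:E | t in S])%E.
    by apply: le_ereal_inf_tmp => _ [t St <-]; rewrite lee_fin ler_pdivrMr // mulrC; exact: hx.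
  move/(lee_wpmul2l (x := c%:E)); rewrite -EFinM mulrC divfK ?gt_eqF //.
  by apply; rewrite lee_fin ltW.
move=> c_le0; have ct0 := hx t0 St0; have gt0 := g0 t0.
have -> : x = 0 by nra.
rewrite le_eqVlt in c_le0; case/orP: c_le0 => [/eqP ->|c_lt0].
  by rewrite mul0e.
have gt00 : g t0 = 0 by nra.
have -> : ereal_inf [set (g t)%:E | t in S] = 0%E.
  apply/le_anti/andP; split; first by apply: ereal_inf_lbound; exists t0; rewrite ?gt00.
  by apply: le_ereal_inf_tmp => _ [t _ <-]; rewrite lee_fin.
by rewrite mule0.
Qed.

Section MinimizingSequence.
Variables (R : realType) (W V : normedModType R) (A : W -> V -> R) (M : R)
  (Veta : set V) (u : W) (Wt : set W) (J : W -> R) (cstar Cstar kappa : R).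
Hypothesis A_linearl : forall (a : R) (w1 w2 : W) (v : V),
  A (a *: w1 + w2) v = a * A w1 v + A w2 v.
Hypothesis A_linearr : forall (a : R) (w : W) (v1 v2 : V),
  A w (a *: v1 + v2) = a * A w v1 + A w v2.
Hypothesis A_bounded : forall w v, A w v <= M * `|w| * `|v|.
Hypothesis Veta_neq0 : exists v0 : V, Veta v0 /\ `|v0| != 0.
Hypothesis kappa_gt0 : 0 < kappa.
Hypothesis discrete_infsup :
  forall w, (Wt `|` diff_set Wt) w -> kappa * `|w| <= op_norm A Veta w.
Hypothesis cstar_gt0 : 0 < cstar.
Hypothesis cstar_le_Cstar : cstar <= Cstar.
Hypothesis J_equiv : forall w,
  cstar * op_norm A Veta w <= J w /\ J w <= Cstar * op_norm A Veta w.

Definition minimizing (y : nat -> W) : Prop :=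
  ((fun n => (J (u - y n))%:E) @ \oo --> ereal_inf [set (J (u - w))%:E | w in Wt])%E.

Variable y : nat -> W.
Hypotheses (Wt_y : forall n, Wt (y n)) (y_min : minimizing y).

Lemma minimizing_dist_near w e : Wt w -> 0 < e ->
  \forall n \near \oo, kappa * `|w - y n| <= (1 + Cstar / cstar) * (M * `|u - w|) + e.
Proof.
move=> Wt_w e0; set m := M * `|u - w|.
have m0 : 0 <= m by exact: bilinear_bound_ge0 A_linearr A_bounded Veta_neq0 _.
have Cstar_ge0 : 0 <= Cstar by apply: le_trans cstar_le_Cstar; exact: ltW.
have Jw : J (u - w) <= Cstar * m.
  apply: le_trans (J_equiv _).2 _; apply: ler_wpM2l => //.
  exact: op_norm_le A_bounded Veta_neq0 _.
have : (ereal_inf [set (J (u - w))%:E | w in Wt] < (Cstar * m + cstar * e)%:E)%E.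
  apply: le_lt_trans (ereal_inf_lbound _) _; first by exists w.
  by rewrite lte_fin; have := mulr_gt0 cstar_gt0 e0; lra.
move/(cvg_EFin_near_lt y_min); apply: filterS => n Jn.
have dist_le : kappa * `|w - y n| <= op_norm A Veta (w - u) + op_norm A Veta (u - y n).
  have := op_normD A_linearl A_bounded Veta_neq0 (w - u) (u - y n); rewrite addrA subrK.
  by apply: le_trans; apply: discrete_infsup; right; exists w, (y n).
have wu_le : op_norm A Veta (w - u) <= m.
  by rewrite /m distrC; exact: op_norm_le A_bounded Veta_neq0 _.
have uy_le : op_norm A Veta (u - y n) <= Cstar / cstar * m + e.
  rewrite -(ler_pM2l cstar_gt0); apply: le_trans (J_equiv _).1 _.
  have -> : cstar * (Cstar / cstar * m + e) = Cstar * m + cstar * e.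
    by field; rewrite gt_eqF.
  exact: ltW.
lra.
Qed.

Lemma minimizing_bounded : exists B, forall n, `|y n| <= B.
Proof.
set K := ((1 + Cstar / cstar) * (M * `|u - y 0%N|) + 1) / kappa.
apply: (@near_bounded_seq _ _ _ (`|y 0%N| + K)).
apply: filterS (minimizing_dist_near (Wt_y 0) ltr01) => n hn.
have dist_le : `|y 0%N - y n| <= K.
  by rewrite -(ler_pM2l kappa_gt0) /K mulrCA divff ?gt_eqF // mulr1.
have := ler_distD (y 0%N) (y n) 0; rewrite !subr0 distrC; lra.
Qed.

Variables (Rf : V -> W -> R) (alpha Mstar : R) (ub : W).
Hypotheses (Rf_clf : forall v, is_clf (Rf v))
  (Rf_dual : forall v, dual_norm (Rf v) <= Mstar * `|v|)
  (alpha_gt0 : 0 < alpha) (Mstar_gt0 : 0 < Mstar)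
  (alpha_le_infsup : (alpha%:E <= infsup_const Rf)%E)
  (y_weak : weak_cvg y ub).

Lemma weak_limit_quasi_optimal w : Wt w ->
  `|u - ub| <= (1 + 2 * (Cstar / cstar) * (Mstar / alpha) * (M / kappa)) * `|u - w|.
Proof.
move=> Wt_w; set m := M * `|u - w|; set q := Cstar / cstar.
have m0 : 0 <= m by exact: bilinear_bound_ge0 A_linearr A_bounded Veta_neq0 _.
have q1 : 1 <= q by rewrite ler_pdivlMr // mul1r.
set K := (1 + q) * m / kappa.
have K0 : 0 <= K by apply: divr_ge0; [apply: mulr_ge0 => //; lra | exact: ltW].
have near_K e : 0 < e -> \forall n \near \oo, `|w - y n| <= K + e.
  move=> e0; apply: filterS (minimizing_dist_near Wt_w (mulr_gt0 e0 kappa_gt0)) => n hn.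
  rewrite -(ler_pM2l kappa_gt0).
  have -> : kappa * (K + e) = (1 + q) * m + e * kappa by rewrite /K; field; rewrite gt_eqF.
  exact: hn.
have alpha_dist : alpha * `|w - ub| <= Mstar * K.
  apply: (infsup_le alpha_le_infsup); first by apply: mulr_ge0 => //; exact: ltW.
  move=> v _; apply: le_trans (ler_norm _) _.
  apply: le_trans (clf_weak_limit_le (Rf_clf v) y_weak near_K) _.
  by rewrite mulrAC; apply: ler_wpM2r.
set X := Mstar / alpha * (m / kappa).
have X0 : 0 <= X by apply: mulr_ge0; apply: divr_ge0 => //; exact: ltW.
have dist_X : `|w - ub| <= (1 + q) * X.
  rewrite -(ler_pM2l alpha_gt0) (_ : _ * (_ * X) = Mstar * K) //.
  by rewrite /K /X; field; rewrite !gt_eqF.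
have -> : (1 + 2 * q * (Mstar / alpha) * (M / kappa)) * `|u - w| = `|u - w| + 2 * q * X.
  by rewrite /X /m; field; rewrite !gt_eqF.
apply: le_trans (ler_distD w _ _) _; rewrite lerD2l; nra.
Qed.

End MinimizingSequence.

Lemma ultra_cvg_bounded_real (R : realType) (I : Type) (U : set_system I) (g : I -> R) (B : R) :
  UltraFilter U -> (forall i, `|g i| <= B) -> exists p : R, g i @[i --> U] --> p.
Proof.
move=> UU gB; have PU : ProperFilter U by apply: ultra_proper.
have [p [_ p_cluster]] : `[- B, B] `&` cluster (g @ U) !=set0.
  apply: (@segment_compact R (- B) B); apply: (@filterS _ U _ setT); last exact: filterT.
  by move=> i _ /=; rewrite in_itv /= -ler_norml.
exists p => N /= Np; have [//|UNc] := in_ultra_setVsetC (g @^-1` N) UU.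
by have [x []] := p_cluster (~` N) N UNc Np.
Qed.

(* f |-> lim_U f (y i) is a bounded linear functional on W', hence by
   reflexivity the evaluation at some z. *)
Lemma reflexive_ultra_weak_lim (R : realType) (W : normedModType R) (I : Type)
  (U : set_system I) (y : I -> W) (B : R) :
  reflexive_space W -> UltraFilter U -> (forall i, `|y i| <= B) ->
  exists z : W, forall f, is_clf f -> f (y i) @[i --> U] --> f z.
Proof.
move=> reflW UU yB; have PU : ProperFilter U by apply: ultra_proper.
have fyB f : is_clf f -> forall i, `|f (y i)| <= dual_norm f * B.
  move=> hf i; apply: le_trans (clf_le_dual_norm hf _) _.
  by apply: ler_wpM2l; [exact: dual_norm_ge0 | exact: yB].
pose Phi (f : W -> R) : R := lim (f (y i) @[i --> U]).
have Phi_lim f : is_clf f -> f (y i) @[i --> U] --> Phi f.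
  move=> hf; have [p fp] := ultra_cvg_bounded_real UU (fyB f hf).
  by rewrite /Phi (cvg_lim _ fp).
have [z Phi_z] : exists z : W, forall f, is_clf f -> Phi f = f z.
  apply: reflW => [a f g hf hg|].
    by apply: cvg_lim => //=; exact: cvgD (cvgMl_tmp (Phi_lim f hf)) (Phi_lim g hg).
  exists B => f hf; rewrite mulrC.
  apply: (closed_cvg [set r | r <= dual_norm f * B] (@closed_le _ _) _ _ (cvg_norm (Phi_lim f hf))).
  by apply: (@filterS _ U _ setT); [move=> i _; exact: fyB | exact: filterT].
by exists z => f hf; rewrite -Phi_z //; exact: Phi_lim.
Qed.

Lemma frequently_ultra (S : set nat) : (forall N, exists k, (N <= k)%N /\ S k) ->
  exists U : set_system nat, [/\ UltraFilter U, \oo `<=` U & U S].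
Proof.
move=> S_freq.
pose G := [set P : set nat | exists N, forall k, (N <= k)%N -> S k -> P k].
have PG : ProperFilter G.
  apply: Build_ProperFilter_ex.
    by move=> P [N hN]; have [k [Nk Sk]] := S_freq N; exists k; exact: hN.
  split; first by exists 0%N.
    move=> P Q [N1 h1] [N2 h2]; exists (maxn N1 N2) => k.
    by rewrite geq_max => /andP [? ?] Sk; split; [exact: h1 | exact: h2].
  by move=> P Q PQ [N hN]; exists N => k Nk Sk; apply: PQ; exact: hN.
have [U [UU GU]] := ultraFilterLemma PG.
exists U; split => //; last by apply: GU; exists 0%N.
by move=> P [N _ hN]; apply: GU; exists N => k Nk _; exact: hN.
Qed.

Lemma not_cvg_frequently_far (R : realType) (x : nat -> R) (l : R) :
  ~ (x k @[k --> \oo] --> l) ->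
  exists2 eps, 0 < eps & forall N, exists k, (N <= k)%N /\ eps <= `|l - x k|.
Proof.
move=> x_ncvg; apply: contrapT => far; apply: x_ncvg; apply/cvgrPdist_lt => eps eps0.
apply: contrapT => not_near; apply: far; exists eps => // N; apply: contrapT => hN.
apply: not_near; exists N => // k /= Nk; rewrite ltNge; apply/negP => le_eps.
by apply: hN; exists k.
Qed.

Lemma ultra_diagonal_subseq (R : realType) (U : set_system nat) (h : nat -> nat -> R)
  (l : nat -> R) :
  ProperFilter U -> \oo `<=` U -> (forall j, h j n @[n --> U] --> l j) ->
  exists phi : nat -> nat, (forall k, (phi k < phi k.+1)%N) /\
    forall j, h j (phi k) @[k --> \oo] --> l j.
Proof.
move=> PU ooU hl.
have good k m : exists n, (m < n)%N /\ forall j, (j <= k)%N -> `|l j - h j n| < k.+1%:R^-1.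
  have k_gt0 : 0 < k.+1%:R^-1 :> R by rewrite invr_gt0 ltr0n.
  have near_k k' : U [set n | forall j, (j <= k')%N -> `|l j - h j n| < k.+1%:R^-1].
    elim: k' => [|k' IH].
      have /cvgrPdist_lt/(_ _ k_gt0) := hl 0%N; apply: filterS => n hn j.
      by rewrite leqn0 => /eqP ->.
    have /cvgrPdist_lt/(_ _ k_gt0) near_k' := hl k'.+1.
    apply: filterS (filterI IH near_k') => n [h1 h2] j.
    by rewrite leq_eqVlt ltnS => /orP [/eqP ->|]; [exact: h2 | exact: h1].
  have Um : U [set n | (m < n)%N] by apply: ooU; exists m.+1 => // n.
  by have [n [? ?]] := filter_ex (filterI Um (near_k k)); exists n.
have good_fun k : exists f : nat -> nat, forall m, (m < f m)%N /\
    forall j, (j <= k)%N -> `|l j - h j (f m)| < k.+1%:R^-1.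
  by have [f hf] := choice (good k); exists f.
have [nx hnx] := choice good_fun.
pose phi := fix phi k := if k is k'.+1 then nx k (phi k') else nx 0%N 0%N.
have phi_close k j : (j <= k)%N -> `|l j - h j (phi k)| < k.+1%:R^-1.
  by case: k => [|k]; [exact: (hnx 0%N 0%N).2 | exact: (hnx k.+1 _).2].
exists phi; split => [k|j]; first exact: (hnx k.+1 (phi k)).1.
apply/cvgrPdist_lt => eps eps0.
have [K hK] := ltr_add_invr eps0; rewrite add0r in hK.
exists (maxn j K) => // k /=; rewrite geq_max => /andP [jk Kk].
apply: lt_trans (phi_close k j jk) _; apply: le_lt_trans hK.
by rewrite lef_pV2 ?posrE ?ltr0n // ler_nat.
Qed.

(* With z the weak limit along a free ultrafilter U, the diagonal subsequence
   converges to z against every g j.  Along any free ultrafilter U' its weak limit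
   z' then agrees with z on all g j, so z' = z; choosing U' to contain a set of
   indices where f stays far from f z gives a contradiction. *)
Lemma bounded_weak_cvg_subseq (R : realType) (W : normedModType R) (g : nat -> W -> R)
  (y : nat -> W) (B : R) :
  reflexive_space W -> (forall j, is_clf (g j)) ->
  (forall d, (forall j, g j d = 0) -> d = 0) -> (forall n, `|y n| <= B) ->
  exists (phi : nat -> nat) (z : W),
    (forall n, (phi n < phi n.+1)%N) /\ weak_cvg (y \o phi) z.
Proof.
move=> reflW g_clf g_sep yB.
have [U [UU ooU _]] := @frequently_ultra setT (fun N => ex_intro _ N (conj (leqnn N) I)).
have PU : ProperFilter U by apply: ultra_proper.
have [z yz] := reflexive_ultra_weak_lim reflW UU yB.
have [phi [phi_incr gphi]] := ultra_diagonal_subseq PU ooU (fun j => yz _ (g_clf j)).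
exists phi, z; split => // f hf; apply: contrapT => /not_cvg_frequently_far [eps eps0 far].
have [U' [UU' ooU' far_U']] := frequently_ultra far.
have PU' : ProperFilter U' by apply: ultra_proper.
have [z' yz'] := reflexive_ultra_weak_lim reflW UU' (fun n => yB (phi n)).
have z'z : z' = z.
  apply/eqP; rewrite -subr_eq0; apply/eqP/g_sep => j; rewrite clfB //.
  apply/eqP; rewrite subr_eq0; apply/eqP.
  have gz : g j ((y \o phi) n) @[n --> U'] --> g j z.
    by move=> N hN; apply: ooU'; exact: gphi j N hN.
  exact: (@cvg_unique _ (@norm_hausdorff _ _) _ _ _ _ (yz' _ (g_clf j)) gz).
have /cvgrPdist_lt/(_ _ eps0) near_f := yz' f hf; rewrite z'z in near_f.
have [k [/= k_close k_far]] := filter_ex (filterI near_f far_U').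
by move: k_close; rewrite ltNge k_far.
Qed.

Lemma separable_dense_seq (R : realType) (V : normedModType R) :
  separable_space V -> exists e : nat -> V, forall v eps, 0 < eps -> exists j, `|v - e j| < eps.
Proof.
move=> [D [cD dD]].
have [d0 Dd0] : D !=set0 by have [x [_ Dx]] := dD setT (ex_intro _ 0 I) openT; exists x.
have /countable_injP [i i_inj] := cD.
pose e n := xget d0 [set v | D v /\ i v = n].
exists e => v eps eps0.
have [w [vw Dw]] := dD (ball v eps) (ex_intro _ v (ballxx v eps0)) (ball_open v eps).
exists (i w); have [De ie] : D (e (i w)) /\ i (e (i w)) = i w.
  by apply: (xgetPex d0 (P := [set v | D v /\ i v = i w])); exists w.
have -> : e (i w) = w by apply: i_inj; rewrite ?inE.
by move: vw; rewrite -ball_normE.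
Qed.

Lemma infsup_dense_eq0 (R : realType) (W V : normedModType R) (Rf : V -> W -> R)
  (alpha Mstar : R) (e : nat -> V) (d : W) :
  (forall v, is_clf (Rf v)) ->
  (forall (a : R) (v1 v2 : V) (w : W), Rf (a *: v1 + v2) w = a * Rf v1 w + Rf v2 w) ->
  (forall v, dual_norm (Rf v) <= Mstar * `|v|) -> 0 < alpha -> 0 < Mstar ->
  (alpha%:E <= infsup_const Rf)%E ->
  (forall v eps, 0 < eps -> exists j, `|v - e j| < eps) ->
  (forall j, Rf (e j) d = 0) -> d = 0.
Proof.
move=> Rf_clf Rf_lin Rf_dual alpha_gt0 Mstar_gt0 infsup e_dense ed0.
apply: (infsup_eq0 infsup alpha_gt0) => v; apply/eqP; rewrite -normr_le0.
apply/ler_addgt0Pr => eps eps0; rewrite add0r.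
have c0 : 0 <= Mstar * `|d| by apply: mulr_ge0; [exact: ltW | exact: normr_ge0].
have c1 : 0 < Mstar * `|d| + 1 by lra.
have [j vej] := e_dense v _ (divr_gt0 eps0 c1).
have -> : Rf v d = Rf (v - e j) d.
  by have := Rf_lin 1 (v - e j) (e j) d; rewrite scale1r mul1r subrK ed0 addr0.
apply: le_trans (clf_le_dual_norm (Rf_clf _) d) _.
apply: le_trans (ler_wpM2r (normr_ge0 d) (Rf_dual _)) _.
rewrite mulrAC; apply: le_trans (ler_wpM2l c0 (ltW vej)) _.
rewrite mulrA ler_pdivrMr //; nra.
Qed.

Theorem mainTheorem6 (R : realType) (W V : completeNormedModType R)
  (A : W -> V -> R) (F : V -> R) (M : R) (u : W)
  (Wt : set W) (Veta : set V)
  (Rf : V -> W -> R) (alpha Mstar kappa : R)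
  (J : W -> R) (cstar Cstar : R)
  (wt : nat -> W) (ub : W) :
  reflexive_space W -> reflexive_space V ->
  separable_space W -> separable_space V ->
  (forall (a : R) (w1 w2 : W) (v : V), A (a *: w1 + w2) v = a * A w1 v + A w2 v) ->
  (forall (a : R) (w : W) (v1 v2 : V), A w (a *: v1 + v2) = a * A w v1 + A w v2) ->
  (forall w v, A w v <= M * `|w| * `|v|) ->
  (forall (a : R) (v1 v2 : V), F (a *: v1 + v2) = a * F v1 + F v2) ->
  (exists CF : R, forall v, `|F v| <= CF * `|v|) ->
  (forall v, A u v = F v) ->
  (forall u' : W, (forall v, A u' v = F v) -> u' = u) ->
  (exists v0 : V, Veta v0 /\ `|v0| != 0) ->
  (forall v, is_clf (Rf v)) ->
  (forall (a : R) (v1 v2 : V) (w : W), Rf (a *: v1 + v2) w = a * Rf v1 w + Rf v2 w) ->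
  0 < alpha -> 0 < Mstar -> 0 < kappa ->
  (alpha%:E <= ereal_inf [set ereal_sup
       [set (Rf v w / (`|w| * `|v|))%:E | v in [set v : V | (v != 0)%R]]
     | w in [set w : W | (w != 0)%R]])%E ->
  (forall v, dual_norm (Rf v) <= Mstar * `|v|) ->
  (forall w, (Wt `|` diff_set Wt) w -> kappa * `|w| <= op_norm A Veta w) ->
  0 < cstar -> cstar <= Cstar ->
  (forall w, cstar * op_norm A Veta w <= J w /\ J w <= Cstar * op_norm A Veta w) ->
  (forall n, Wt (wt n)) ->
  ((fun n => (J (u - wt n))%:E) @ \oo
     --> ereal_inf [set (J (u - w))%:E | w in Wt])%E ->
  weak_cvg wt ub ->
  ((`|u - ub|)%:E <=
     (1 + 2 * (Cstar / cstar) * (Mstar / alpha) * (M / kappa))%:E *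
       ereal_inf [set (`|u - w|)%:E | w in Wt])%E
  /\
  (forall w' : nat -> W, (forall n, Wt (w' n)) ->
     ((fun n => (J (u - w' n))%:E) @ \oo
        --> ereal_inf [set (J (u - w))%:E | w in Wt])%E ->
     (exists B : R, forall n, `|w' n| <= B) /\
     (exists (phi : nat -> nat) (z : W),
        (forall n, (phi n < phi n.+1)%N) /\ weak_cvg (w' \o phi) z)).
Proof.
move=> reflW _ _ sepV A_linl A_linr A_bdd _ _ _ _ Veta_neq0 Rf_clf Rf_lin alpha_gt0 Mstar_gt0
  kappa_gt0 infsup Rf_dual discrete_infsup cstar_gt0 cstar_le J_equiv Wt_wt wt_min wt_weak.
split.
  apply: le_scale_ereal_inf (Wt_wt 0%N) (fun w => normr_ge0 _) (normr_ge0 _) _.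
  exact: (weak_limit_quasi_optimal A_linl A_linr A_bdd Veta_neq0 kappa_gt0 discrete_infsup
    cstar_gt0 cstar_le J_equiv Wt_wt wt_min Rf_clf Rf_dual alpha_gt0 Mstar_gt0 infsup wt_weak).
move=> w' Wt_w' w'_min.
have [B w'B] := minimizing_bounded A_linl A_linr A_bdd Veta_neq0 kappa_gt0 discrete_infsup
  cstar_gt0 cstar_le J_equiv Wt_w' w'_min.
split; first by exists B.
have [e e_dense] := separable_dense_seq sepV.
apply: (bounded_weak_cvg_subseq (g := fun j => Rf (e j)) reflW (fun j => Rf_clf _) _ w'B).
move=> d; exact: infsup_dense_eq0 Rf_clf Rf_lin Rf_dual alpha_gt0 Mstar_gt0 infsup e_dense.
Qed.
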